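(* Let $\theta_{01}\in\mathbb{R}$ and let $\sigma_U^2>0$, $\sigma_V^2>0$, $\sigma_{UV}\in\mathbb{R}$ satisfy $|\rho_{UV}|<1$, where $\rho_{UV}=\sigma_{UV}/(\sigma_U\sigma_V)$. Define the identified set $S$ as the set of all $\sigma_{U^*}^2\ge 0$ for which there exist $\sigma_{V^*}^2\ge 0$, $\sigma_\varepsilon^2\ge 0$ and $\sigma_{U^*V^*}\in\mathbb{R}$ with $\sigma_{U^*V^*}^2\le \sigma_{U^*}^2\sigma_{V^*}^2$ such that $$\sigma_U^2=\sigma_{U^*}^2+\theta_{01}^2\sigma_\varepsilon^2,\qquad \sigma_V^2=\sigma_{V^*}^2+\sigma_\varepsilon^2,\qquad \sigma_{UV}=\sigma_{U^*V^*}-\theta_{01}\sigma_\varepsilon^2 .$$ Then $S=[\underline{\sigma}_{U^*}^2,\sigma_U^2]$, where $$\underline{\sigma}_{U^*}^2=\max\left\{\frac{(\theta_{01}\sigma_{UV}+\sigma_U^2)^2}{\sigma_V^2\theta_{01}^2+2\sigma_{UV}\theta_{01}+\sigma_U^2},\ \sigma_U^2-\theta_{01}^2\sigma_V^2\right\}.$$ *)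

From Stdlib Require Import Reals.
Open Scope R_scope.

Definition identified_set (theta su2 sv2 suv : R) (sustar2 : R) : Prop :=
  0 <= sustar2 /\
  exists svstar2 se2 suvstar : R,
    0 <= svstar2 /\ 0 <= se2 /\ suvstar ^ 2 <= sustar2 * svstar2 /\
    su2 = sustar2 + theta ^ 2 * se2 /\
    sv2 = svstar2 + se2 /\
    suv = suvstar - theta * se2.

Definition lower_bound (theta su2 sv2 suv : R) : R :=
  Rmax ((theta * suv + su2) ^ 2 / (sv2 * theta ^ 2 + 2 * suv * theta + su2))
       (su2 - theta ^ 2 * sv2).

(* Write a = sigma_U^2, b = sigma_V^2, c = sigma_UV, t = theta_01, and U', V' for the
   latent variables U^*, V^* with measurement error e.  The moment
   equations say U = U' - t e and V = V' + e, so W := U + t V = U' + t V' does not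
   involve the measurement error.  Its variance is D = b t^2 + 2 c t + a > 0, and
   Cov(U', W) = a + t c.  The first term of the lower bound is therefore the
   Cauchy-Schwarz bound Cov(U', W)^2 / Var(W) <= Var(U'); algebraically this is the
   identity  s D - (t c + a)^2 = t^2 (s svstar2 - suvstar^2)  (covariance_gap_identity),
   which turns the constraint suvstar^2 <= s svstar2 into (t c + a)^2 <= s D and back.
   The second term of the lower bound expresses svstar2 = b - e >= 0, and s <= a
   expresses e >= 0. *)

From Stdlib Require Import Reals Lra Psatz.
Open Scope R_scope.

(* Variance of W = U + t V in terms of the observed moments. *)
Definition combined_variance (t a b c : R) : R := b * t ^ 2 + 2 * c * t + a.

Lemma correlation_bound_sq (a b c : R) :
  0 < a -> 0 < b -> Rabs (c / (sqrt a * sqrt b)) < 1 -> c ^ 2 < a * b.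
Proof.
  intros Ha Hb Hrho.
  set (q := sqrt a * sqrt b) in *.
  assert (Hq : 0 < q) by (unfold q; apply Rmult_lt_0_compat; apply sqrt_lt_R0; assumption).
  assert (Hq2 : q ^ 2 = a * b).
  { unfold q. replace ((sqrt a * sqrt b) ^ 2) with
      ((sqrt a * sqrt a) * (sqrt b * sqrt b)) by ring.
    rewrite !sqrt_sqrt; lra. }
  assert (Habs : Rabs c < q).
  { replace c with ((c / q) * q) by (field; lra).
    rewrite Rabs_mult, (Rabs_pos_eq q) by lra. nra. }
  rewrite <- pow2_abs, <- Hq2.
  pose proof (Rabs_pos c). nra.
Qed.

(* Under strict Cauchy-Schwarz, W has positive variance: b D = (t b + c)^2 + (a b - c^2). *)
Lemma combined_variance_pos (t a b c : R) :
  0 < b -> c ^ 2 < a * b -> 0 < combined_variance t a b c.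
Proof.
  intros Hb Hcs. unfold combined_variance.
  assert (Hfact : b * (b * t ^ 2 + 2 * c * t + a) = (t * b + c) ^ 2 + (a * b - c ^ 2))
    by ring.
  assert (0 <= (t * b + c) ^ 2) by apply pow2_ge_0.
  nra.
Qed.

Lemma div_le_iff (n d s : R) : 0 < d -> (n / d <= s <-> n <= s * d).
Proof.
  intros Hd. unfold Rdiv. split; intros H.
  - apply (Rmult_le_compat_r d) in H; [|lra].
    rewrite Rmult_assoc, Rinv_l, Rmult_1_r in H by lra. exact H.
  - apply (Rmult_le_reg_r d); [exact Hd|].
    rewrite Rmult_assoc, Rinv_l, Rmult_1_r by lra. exact H.
Qed.

(* The Cauchy-Schwarz gap of (U', W) equals t^2 times that of (U', V'), once the
   latent moments are expressed through the measurement-error variance e. *)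
Lemma covariance_gap_identity (t a b c s e : R) :
  a = s + t ^ 2 * e ->
  s * combined_variance t a b c - (t * c + a) ^ 2
  = t ^ 2 * (s * (b - e) - (c + t * e) ^ 2).
Proof. intros Ha. unfold combined_variance. subst a. ring. Qed.

Lemma lower_bound_le_iff (t a b c s : R) :
  0 < combined_variance t a b c ->
  lower_bound t a b c <= s <->
  (t * c + a) ^ 2 <= s * combined_variance t a b c /\ a - t ^ 2 * b <= s.
Proof.
  intros HD. unfold lower_bound. fold (combined_variance t a b c).
  rewrite <- (div_le_iff _ _ _ HD). split.
  - intros H. split; eapply Rle_trans; [apply Rmax_l | exact H | apply Rmax_r | exact H].
  - intros [H1 H2]. apply Rmax_lub; assumption.
Qed.

Lemma identified_set_bounds (t a b c s : R) :
  0 < combined_variance t a b c ->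
  identified_set t a b c s -> lower_bound t a b c <= s <= a.
Proof.
  intros HD [Hs [svs [e [u [Hsv [He [Hu [Ea [Eb Ec]]]]]]]]].
  assert (Ht2 : 0 <= t ^ 2) by apply pow2_ge_0.
  split; [apply lower_bound_le_iff; [exact HD | split] |].
  - assert (Hgap := covariance_gap_identity t a b c s e Ea).
    replace (b - e) with svs in Hgap by lra.
    replace (c + t * e) with u in Hgap by lra.
    assert (0 <= t ^ 2 * (s * svs - u ^ 2)) by (apply Rmult_le_pos; lra).
    lra.
  - rewrite Ea, Eb. nra.
  - rewrite Ea. nra.
Qed.

(* Conversely, every s in [lower_bound, a] is attained: take e = (a - s) / t^2
   (or e = 0 when t = 0), svstar2 = b - e and suvstar = c + t e. *)
Lemma bounds_identified_set (t a b c s : R) :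
  0 < a -> c ^ 2 < a * b -> 0 < combined_variance t a b c ->
  lower_bound t a b c <= s <= a -> identified_set t a b c s.
Proof.
  intros Ha Hcs HD [Hlow Hsa].
  apply (lower_bound_le_iff _ _ _ _ _ HD) in Hlow as [Hproj Hvstar].
  destruct (Req_dec t 0) as [Ht | Ht].
  - subst t. unfold combined_variance in Hproj.
    assert (Hs : s = a) by nra.
    subst s. split; [lra|].
    exists b, 0, c. repeat split; try lra; try ring.
    nra.
  - assert (Ht2 : 0 < t ^ 2) by (pose proof (Rsqr_pos_lt t Ht); unfold Rsqr in *; lra).
    set (e := (a - s) / t ^ 2).
    assert (Ea : a = s + t ^ 2 * e) by (unfold e; field; exact Ht).
    assert (He : 0 <= e) by nra.
    assert (Hgap := covariance_gap_identity t a b c s e Ea).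
    assert (Hs : 0 <= s).
    { assert (0 <= (t * c + a) ^ 2) by apply pow2_ge_0. nra. }
    split; [exact Hs|].
    exists (b - e), e, (c + t * e).
    repeat split; try lra; try ring.
    + nra.
    + assert (0 <= t ^ 2 * (s * (b - e) - (c + t * e) ^ 2)) by lra. nra.
Qed.

Theorem proposition1 (theta su2 sv2 suv : R) :
  0 < su2 -> 0 < sv2 ->
  Rabs (suv / (sqrt su2 * sqrt sv2)) < 1 ->
  forall s : R,
    identified_set theta su2 sv2 suv s <->
    (lower_bound theta su2 sv2 suv <= s <= su2).
Proof.
  intros Hu Hv Hrho s.
  assert (Hcs := correlation_bound_sq su2 sv2 suv Hu Hv Hrho).
  assert (HD := combined_variance_pos theta su2 sv2 suv Hv Hcs).
  split.
  - apply identified_set_bounds; exact HD.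
  - apply bounds_identified_set; assumption.
Qed.
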